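(* For any parameter of the ranking block, for every instance $I$ (with $n,m\ge1$) and every preference profile $\succcurlyeq_I$ reported truthfully, the matching matrix $\hat{\bm M}_I$ output by NeuralSD at inference satisfies $irv(\hat{\bm M}_I,\succcurlyeq_I)\le 1/2$; i.e. $\max_{I}irv(\hat{\bm M}_I,\succcurlyeq_I)\le1/2$.
   Context: An instance consists of workers $W=\{w_1,\dots,w_n\}$, firms $F=\{f_1,\dots,f_m\}$ and public contexts $\bm X_W\in\mathbb R^{n\times d}$, $\bm X_F\in\mathbb R^{m\times d}$. Workers have linear-order preferences on $F\cup\{\perp\}$, firms on $W\cup\{\perp\}$ ($\perp$ = unmatched); $b\succ_a b'$ means $b\ne b'$, $b\succcurlyeq_a b'$. Serial dictatorship (SD) with ranking $\bm r$ of $W\cup F$: for $k=1,\dots,n+m$, if $r_k$ is not yet matched, it is assigned its most preferred option among $\perp$ and the not-yet-matched agents of the other side. NeuralSD at inference: compute $\bm X=[\bm X_W;\bm X_F]$, $\bm A=\mathrm{softmax}_{\rm row}(\bm X\bm W^Q(\bm X\bm W^K)^\top/\sqrt{d_{\rm emb}})\bm X\bm W^V$, scores $\bm a=\bm w\bm A^\top+b$, tie-broken scores $\bm a+\mathrm{rank}(\bm a)$ with $\mathrm{rank}(\bm a)_i=\#\{j:a_j<a_i\text{ or }(a_j=a_i,j<i)\}$; sort agents by these scores (argsort) to get a ranking $\bm r$, and output the SD matching with ranking $\bm r$ on the reports. Matching matrix $\bm M\in\{0,1\}^{(n+1)\times(m+1)}$: $M_{ij}=1$ iff $w_i$ matched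 with $f_j$, $M_{i,m+1}=1$ iff $w_i$ unmatched, $M_{n+1,j}=1$ iff $f_j$ unmatched, $M_{n+1,m+1}=0$. For $i\in[n],j\in[m]$: $p_{ij}=\frac1m\big(\mathbb I[f_j\succ_{w_i}\perp]+\sum_{j''=1}^m(\mathbb I[f_j\succ_{w_i}f_{j''}]-\mathbb I[\perp\succ_{w_i}f_{j''}])\big)$, $q_{ji}=\frac1n\big(\mathbb I[w_i\succ_{f_j}\perp]+\sum_{i''=1}^n(\mathbb I[w_i\succ_{f_j}w_{i''}]-\mathbb I[\perp\succ_{f_j}w_{i''}])\big)$, and $irv(\bm M,\succcurlyeq)=\frac1{2n}\sum_{i,j}M_{ij}\max\{-q_{ji},0\}+\frac1{2m}\sum_{i,j}M_{ij}\max\{-p_{ij},0\}$ (sums over $i\in[n],j\in[m]$). *)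

From HB Require Import structures.
From mathcomp Require Import all_boot all_order all_algebra.
From mathcomp Require Import reals.
From mathcomp.analysis Require Import sequences exp.
Set Implicit Arguments. Unset Strict Implicit. Unset Printing Implicit Defensive.
Import Order.TTheory GRing.Theory Num.Theory.
Local Open Scope ring_scope.

(* Preferences.  Workers are 'I_n, firms are 'I_m, ⊥ is [None].           *)
(* A linear order on F ∪ {⊥} is given by an injective utility              *)
Definition strict_pref (T : Type) (u : T -> nat) (b b' : T) : bool :=
  (u b' < u b)%N.

Section SD.
Variables (n m : nat).
Variable pw : 'I_n -> option 'I_m -> nat.
Variable pf : 'I_m -> option 'I_n -> nat.

(* State of serial dictatorship: partner of each worker (None = unmatched
   so far / ⊥), set of already-assigned workers, set of assigned firms. *)
Definition sd_state := ({ffun 'I_n -> option 'I_m} * {set 'I_n} * {set 'I_m})%type.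

Definition availF (AF : {set 'I_m}) (o : option 'I_m) : bool :=
  if o is Some j then j \notin AF else true.
Definition availW (AW : {set 'I_n}) (o : option 'I_n) : bool :=
  if o is Some i then i \notin AW else true.

Definition set_partner (mu : {ffun 'I_n -> option 'I_m}) (i : 'I_n) (j : 'I_m) :
  {ffun 'I_n -> option 'I_m} := [ffun i' => if i' == i then Some j else mu i'].

(* Agent k of the ranking: index k < n is worker k, index n + j is firm j. *)
Definition sd_step (st : sd_state) (k : 'I_(n + m)) : sd_state :=
  let: (mu, AW, AF) := st in
  match split k with
  | inl i =>
      if i \in AW then st else
      match [arg max_(o > (None : option 'I_m) | availF AF o) pw i o] with
      | Some j => (set_partner mu i j, i |: AW, j |: AF)
      | None => (mu, i |: AW, AF)
      end
  | inr j =>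
      if j \in AF then st else
      match [arg max_(o > (None : option 'I_n) | availW AW o) pf j o] with
      | Some i => (set_partner mu i j, i |: AW, j |: AF)
      | None => (mu, AW, j |: AF)
      end
  end.

Definition serial_dictatorship (r : seq 'I_(n + m)) : {ffun 'I_n -> option 'I_m} :=
  (foldl sd_step ([ffun=> None], set0, set0) r).1.1.

End SD.

Definition matching_matrix (R : nzRingType) n m (mu : {ffun 'I_n -> option 'I_m}) :
  'M[R]_(n.+1, m.+1) :=
  \matrix_(i, j)
    match unlift ord_max i, unlift ord_max j with
    | Some i', Some j' => (mu i' == Some j')%:R
    | Some i', None => (mu i' == None)%:R
    | None, Some j' => [forall i' : 'I_n, mu i' != Some j']%:R
    | None, None => 0
    end.

Section IRV.
Variables (R : realFieldType) (n m : nat).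
Variable pw : 'I_n -> option 'I_m -> nat.
Variable pf : 'I_m -> option 'I_n -> nat.

Definition p_w (i : 'I_n) (j : 'I_m) : R :=
  m%:R^-1 * ((strict_pref (pw i) (Some j) None)%:R
    + \sum_(j'' < m) ((strict_pref (pw i) (Some j) (Some j''))%:R
                      - (strict_pref (pw i) None (Some j''))%:R)).

Definition q_f (j : 'I_m) (i : 'I_n) : R :=
  n%:R^-1 * ((strict_pref (pf j) (Some i) None)%:R
    + \sum_(i'' < n) ((strict_pref (pf j) (Some i) (Some i''))%:R
                      - (strict_pref (pf j) None (Some i''))%:R)).

Definition inner_w (i : 'I_n) : 'I_n.+1 := widen_ord (leqnSn n) i.
Definition inner_f (j : 'I_m) : 'I_m.+1 := widen_ord (leqnSn m) j.

Definition irv (M : 'M[R]_(n.+1, m.+1)) : R :=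
  (2 * n%:R)^-1 * \sum_(i < n) \sum_(j < m)
      M (inner_w i) (inner_f j) * Num.max (- q_f j i) 0
  + (2 * m%:R)^-1 * \sum_(i < n) \sum_(j < m)
      M (inner_w i) (inner_f j) * Num.max (- p_w i j) 0.
End IRV.

Section NeuralSD.
Variable R : realType.

Definition softmax_row N (S : 'M[R]_N) : 'M[R]_N :=
  \matrix_(i, j) (expR (S i j) / \sum_(k < N) expR (S i k)).

Definition neural_scores N d de dv (X : 'M[R]_(N, d))
    (WQ WK : 'M[R]_(d, de)) (WV : 'M[R]_(d, dv)) (w : 'rV[R]_dv) (b : R)
    : 'rV[R]_N :=
  let S := (Num.sqrt (de%:R))^-1 *: ((X *m WQ) *m (X *m WK)^T) in
  let A := softmax_row S *m (X *m WV) in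
  w *m A^T + const_mx b.

Definition tie_rank N (a : 'rV[R]_N) (i : 'I_N) : nat :=
  #|[set j : 'I_N | (a 0 j < a 0 i) || ((a 0 j == a 0 i) && (j < i)%N)]|.

Definition tie_broken N (a : 'rV[R]_N) (i : 'I_N) : R := a 0 i + (tie_rank a i)%:R.

Definition argsort N (s : 'I_N -> R) : seq 'I_N :=
  sort (fun i j => (s i < s j) || ((s i == s j) && (i <= j)%N)) (enum 'I_N).

Definition neuralSD_matching n m d de dv (XW : 'M[R]_(n, d)) (XF : 'M[R]_(m, d))
    (WQ WK : 'M[R]_(d, de)) (WV : 'M[R]_(d, dv)) (w : 'rV[R]_dv) (b : R)
    (pw : 'I_n -> option 'I_m -> nat) (pf : 'I_m -> option 'I_n -> nat)
    : 'M[R]_(n.+1, m.+1) :=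
  let X := col_mx XW XF in
  let a := neural_scores X WQ WK WV w b in
  matching_matrix R (serial_dictatorship pw pf (argsort (tie_broken a))).
End NeuralSD.

From HB Require Import structures.
From mathcomp Require Import all_boot all_order all_algebra.
From mathcomp Require Import reals.
From mathcomp.analysis Require Import sequences exp.
From mathcomp Require Import lra.
Import Order.TTheory GRing.Theory Num.Theory.

(* Serial dictatorship never matches a pair that both sides find unacceptable:
   the agent who picks takes its favourite available option, which it weakly
   prefers to remaining unmatched, hence strictly by injectivity of the
   utilities.  So every matched pair has p_ij >= 0 or q_ji >= 0; as both scores
   are >= -1, the pair adds at most 1/(2 min(n, m)) to irv, and at most
   min(n, m) pairs are matched. *)

Set Implicit Arguments. Unset Strict Implicit. Unset Printing Implicit Defensive.

Lemma strict_pref_neq_le (T : eqType) (u : T -> nat) x y :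
  injective u -> x != y -> (u y <= u x)%N -> strict_pref u x y.
Proof.
move=> uI neq_xy; rewrite leq_eqVlt => /orP[/eqP/uI eq_yx|] //.
by rewrite eq_yx eqxx in neq_xy.
Qed.

Section SerialDictatorship.
Variables (n m : nat) (pw : 'I_n -> option 'I_m -> nat) (pf : 'I_m -> option 'I_n -> nat).
Hypotheses (pwI : forall i, injective (pw i)) (pfI : forall j, injective (pf j)).

Definition acceptable (i : 'I_n) (j : 'I_m) : bool :=
  strict_pref (pw i) (Some j) None || strict_pref (pf j) (Some i) None.

Definition one_to_one (mu : {ffun 'I_n -> option 'I_m}) : Prop :=
  forall i1 i2 j, mu i1 = Some j -> mu i2 = Some j -> i1 = i2.

Definition sd_invariant (st : sd_state n m) : Prop :=
  let: (mu, _, AF) := st in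
  [/\ forall i j, mu i = Some j -> j \in AF, one_to_one mu &
      forall i j, mu i = Some j -> acceptable i j].

Lemma set_partnerE (mu : {ffun 'I_n -> option 'I_m}) i j i' :
  set_partner mu i j i' = if i' == i then Some j else mu i'.
Proof. by rewrite ffunE. Qed.

Lemma sd_invariant_set_partner mu AW AW' AF i j :
  sd_invariant (mu, AW, AF) -> j \notin AF -> acceptable i j ->
  sd_invariant (set_partner mu i j, AW', j |: AF).
Proof.
case=> inAF inj ok jAF ok_ij; split=> [i' j'|i1 i2 j'|i' j'].
- rewrite set_partnerE in_setU1; case: eqP => _; first by case=> ->; rewrite eqxx.
  by move/inAF ->; rewrite orbT.
- have fresh i' : mu i' <> Some j by move/inAF; apply/negP.
  rewrite !set_partnerE.
  case: (eqVneq i1 i) => [->|n1]; case: (eqVneq i2 i) => [->|n2] //.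
  + by move=> [<-] /fresh.
  + by move=> mu1 [eq_j]; case: (fresh i1); rewrite mu1 eq_j.
  + exact: inj.
- by rewrite set_partnerE; case: eqP => [-> [<-]|_ /ok].
Qed.

Lemma sd_invariant_step st k : sd_invariant st -> sd_invariant (sd_step pw pf st k).
Proof.
case: st => [[mu AW] AF] inv; rewrite /sd_step.
case: (split k) => [i|j].
- case: ifP => // _; case: arg_maxnP => //= -[j|] avail best //.
  apply: (sd_invariant_set_partner _ inv avail).
  by apply/orP; left; exact: strict_pref_neq_le (@pwI i) _ (best None _).
- case: ifP => // jAF; case: arg_maxnP => //= -[i|] _ best.
    apply: (sd_invariant_set_partner _ inv); first by rewrite jAF.
    by apply/orP; right; exact: strict_pref_neq_le (@pfI j) _ (best None _).
  case: inv => inAF *; split=> // i' j' /inAF.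
  by rewrite in_setU1 => ->; rewrite orbT.
Qed.

Lemma sd_invariant_serial_dictatorship r :
  let mu := serial_dictatorship pw pf r in
  one_to_one mu /\ forall i j, mu i = Some j -> acceptable i j.
Proof.
have: sd_invariant ([ffun=> None], set0, set0) by split=> // ? ?; rewrite ffunE.
rewrite /serial_dictatorship.
elim: r ([ffun=> None], set0, set0) => [|k r IH] st /=; last by move/(sd_invariant_step k)/IH.
by case: st => [[mu AW] AF] [].
Qed.

End SerialDictatorship.

Local Open Scope ring_scope.

Section PreferenceScore.
Variables (R : realFieldType) (T : finType).

Definition pref_score (k : nat) (u : option T -> nat) (x : T) : R :=
  k%:R^-1 * ((strict_pref u (Some x) None)%:R
    + \sum_(y : T) ((strict_pref u (Some x) (Some y))%:R - (strict_pref u None (Some y))%:R)).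

Lemma pref_score_ge0 k u x : strict_pref u (Some x) None -> 0 <= pref_score k u x.
Proof.
move=> x_acc; rewrite mulr_ge0 ?invr_ge0 ?addr_ge0 ?ler0n //.
apply: sumr_ge0 => y _; rewrite subr_ge0 ler_nat /strict_pref.
by case: ltnP => //= /ltn_trans ->.
Qed.

Lemma pref_score_ge_N1 k u x : (0 < k)%N -> (#|T| <= k)%N -> -1 <= pref_score k u x.
Proof.
move=> k_gt0 le_Tk; have k_pos : (0 : R) < k%:R by rewrite ltr0n.
have -> : -1 = k%:R^-1 * - k%:R :> R by rewrite mulrN mulVf ?gt_eqF.
rewrite ler_pM2l ?invr_gt0 // -[- _]add0r lerD ?ler0n //.
apply: le_trans (_ : \sum_(y : T) (-1 : R) <= _).
  by rewrite sumrN sumr_const lerN2 ler_nat.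
apply: ler_sum => y _.
have := ler0n R (strict_pref u (Some x) (Some y)).
have : (strict_pref u None (Some y))%:R <= 1%:R :> R by rewrite ler_nat leq_b1.
lra.
Qed.

End PreferenceScore.

Section IRVBound.
Variables (R : realFieldType) (n m : nat).
Variables (pw : 'I_n -> option 'I_m -> nat) (pf : 'I_m -> option 'I_n -> nat).

Definition irv_cost (i : 'I_n) (j : 'I_m) : R :=
  (2 * n%:R)^-1 * Num.max (- q_f R pf j i) 0 + (2 * m%:R)^-1 * Num.max (- p_w R pw i j) 0.

Lemma p_w_pref_score i j : p_w R pw i j = pref_score R m (pw i) j.
Proof. by []. Qed.

Lemma q_f_pref_score j i : q_f R pf j i = pref_score R n (pf j) i.
Proof. by []. Qed.

Lemma irvE (M : 'M[R]_(n.+1, m.+1)) :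
  irv pw pf M = \sum_(i < n) \sum_(j < m) M (inner_w i) (inner_f j) * irv_cost i j.
Proof.
rewrite /irv !mulr_sumr -big_split; apply: eq_bigr => i _.
by rewrite !mulr_sumr -big_split; apply: eq_bigr => j _; rewrite mulrDr mulrCA [in X in _ + X]mulrCA.
Qed.

Lemma irv_cost_le_min i j : (0 < n)%N -> (0 < m)%N -> acceptable pw pf i j ->
  irv_cost i j <= (2 * (minn n m)%:R)^-1.
Proof.
move=> n_gt0 m_gt0 ok_ij.
rewrite /irv_cost p_w_pref_score q_f_pref_score.
have q_ge : -1 <= pref_score R n (pf j) i by rewrite pref_score_ge_N1 ?card_ord.
have p_ge : -1 <= pref_score R m (pw i) j by rewrite pref_score_ge_N1 ?card_ord.
have weight_le k : (0 < k)%N -> (minn n m <= k)%N ->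
    forall s : R, -1 <= s -> (2 * k%:R)^-1 * Num.max (- s) 0 <= (2 * (minn n m)%:R)^-1.
  move=> k_gt0 le_min_k s s_ge; have min_gt0 : (0 < minn n m)%N by rewrite leq_min n_gt0.
  apply: le_trans (_ : (2 * k%:R)^-1 <= _); last first.
    by rewrite lef_pV2 ?posrE ?mulr_gt0 ?ltr0n // ler_pM2l ?ler_nat.
  by rewrite ger_pMr ?invr_gt0 ?mulr_gt0 ?ltr0n // ge_max ler01 andbT lerNl.
case/orP: ok_ij => [/(pref_score_ge0 R m) ge0|/(pref_score_ge0 R n) ge0].
- by rewrite [Num.max (- pref_score _ _ _ j) 0]max_r ?oppr_le0 // mulr0 addr0 weight_le ?geq_minl.
- by rewrite [Num.max (- pref_score _ _ _ i) 0]max_r ?oppr_le0 // mulr0 add0r weight_le ?geq_minr.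
Qed.

Lemma matching_matrix_inner (mu : {ffun 'I_n -> option 'I_m}) i j :
  matching_matrix R mu (inner_w i) (inner_f j) = (mu i == Some j)%:R.
Proof.
have inner_lift k (x : 'I_k) : widen_ord (leqnSn k) x = lift ord_max x.
  by apply: val_inj; rewrite /= /bump leqNgt ltn_ord.
by rewrite /inner_w /inner_f !inner_lift mxE !liftK.
Qed.

Lemma sum_partner_le1 (mu : {ffun 'I_n -> option 'I_m}) i :
  \sum_(j < m) ((mu i == Some j)%:R : R) <= 1.
Proof.
case mu_i: (mu i) => [j0|]; last by rewrite big1 ?ler01.
rewrite (bigD1 j0) //= eqxx big1 ?addr0 // => j /negbTE neq_j.
by rewrite (inj_eq Some_inj) eq_sym neq_j.
Qed.

Lemma sum_matched_to_le1 (mu : {ffun 'I_n -> option 'I_m}) j :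
  one_to_one mu -> \sum_(i < n) ((mu i == Some j)%:R : R) <= 1.
Proof.
move=> inj; have [i0 /eqP mu_i0|none] := pickP (fun i => mu i == Some j).
  rewrite (bigD1 i0) /= ?mu_i0 ?eqxx // big1 ?addr0 // => i neq_i.
  by case: eqP => // /(inj _ _ _ mu_i0) eq_i; rewrite eq_i eqxx in neq_i.
by rewrite big1 ?ler01 // => i _; rewrite none.
Qed.

Lemma sum_matched_le_min (mu : {ffun 'I_n -> option 'I_m}) : one_to_one mu ->
  \sum_(i < n) \sum_(j < m) ((mu i == Some j)%:R : R) <= (minn n m)%:R.
Proof.
move=> inj; have [_|_] := leqP n m.
  apply: le_trans (_ : \sum_(i < n) 1 <= _); last by rewrite sumr_const card_ord.
  by apply: ler_sum => i _; apply: sum_partner_le1.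
rewrite exchange_big /=.
apply: le_trans (_ : \sum_(j < m) 1 <= _); last by rewrite sumr_const card_ord.
by apply: ler_sum => j _; apply: sum_matched_to_le1.
Qed.

Lemma irv_matching_le_half (mu : {ffun 'I_n -> option 'I_m}) :
  (0 < n)%N -> (0 < m)%N ->
  one_to_one mu -> (forall i j, mu i = Some j -> acceptable pw pf i j) ->
  irv pw pf (matching_matrix R mu) <= 1 / 2.
Proof.
move=> n_gt0 m_gt0 inj ok; set c := (2 * (minn n m)%:R)^-1 : R.
have min_pos : (0 : R) < (minn n m)%:R by rewrite ltr0n leq_min n_gt0.
rewrite irvE; apply: le_trans (_ : \sum_(i < n) \sum_(j < m) c * (mu i == Some j)%:R <= _).
  apply: ler_sum => i _; apply: ler_sum => j _; rewrite matching_matrix_inner mulrC.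
  by case: eqP => [/ok/(irv_cost_le_min n_gt0 m_gt0)|]; rewrite ?mulr1 ?mulr0.
under eq_bigr do rewrite -mulr_sumr.
rewrite -mulr_sumr.
apply: le_trans (ler_wpM2l _ (sum_matched_le_min inj)) _; first by rewrite invr_ge0 mulr_ge0.
by rewrite /c invfM -mulrA mulVf ?gt_eqF // mulr1 mul1r.
Qed.

End IRVBound.

Unset Implicit Arguments. Set Strict Implicit. Set Printing Implicit Defensive.

Theorem proposition5 (R : realType) (n m d de dv : nat)
    (XW : 'M[R]_(n, d)) (XF : 'M[R]_(m, d))
    (WQ WK : 'M[R]_(d, de)) (WV : 'M[R]_(d, dv)) (w : 'rV[R]_dv) (b : R)
    (pw : 'I_n -> option 'I_m -> nat) (pf : 'I_m -> option 'I_n -> nat) :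
  (0 < n)%N -> (0 < m)%N ->
  (forall i, injective (pw i)) -> (forall j, injective (pf j)) ->
  irv pw pf (neuralSD_matching XW XF WQ WK WV w b pw pf) <= 1 / 2.
Proof.
move=> n_gt0 m_gt0 pwI pfI; rewrite /neuralSD_matching; set ranking := argsort _.
have [inj ok] := sd_invariant_serial_dictatorship pwI pfI ranking.
exact: irv_matching_le_half.
Qed.
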